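(* Let $K$ be a simplex in a topological vector space $F$ and let $S,T:K\to 2^{K}$ be correspondences such that (i) for each $x\in K$, $\overline{S}(x)\subset T(x)$ and $S(x)\neq\emptyset$; (ii) $S$ has *-weakly convex graph. Then there exists $x^*\in K$ with $x^*\in T(x^* )$.
   Context: A simplex is the convex hull of a finite affinely independent set. For $S:X\to 2^Y$: $\mathrm{Gr}(S)=\{(x,y)\in X\times Y:y\in S(x)\}$; $\overline{S}(x)=\{y\in Y:(x,y)\in\mathrm{cl}_{X\times Y}\mathrm{Gr}(S)\}$; for $V\subset F$, $S_V(x)=(S(x)+V)\cap Y$. Weakly convex graph: $S:X\to 2^Y$ ($X,Y$ nonempty convex) has weakly convex graph if for each finite set $\{x_1,\dots,x_n\}\subset X$ there exist $y_i\in S(x_i)$ such that $\mathrm{co}\{(x_1,y_1),\dots,(x_n,y_n)\}\subset\mathrm{Gr}(S)$, equivalently $\sum_i\lambda_iy_i\in S(\sum_i\lambda_ix_i)$ for all $\lambda_i\ge0$ with $\sum_i\lambda_i=1$. *-weakly convex graph: $S$ has *-weakly convex graph if for each neighborhood $V$ of the origin in $F$ the correspondence $S_V$ has weakly convex graph. *)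

From Stdlib Require Import Reals List.
Import ListNotations.
Open Scope R_scope.

(* No separation axiom is assumed. *)
Record TVS := mkTVS {
  vT :> Type;
  vzero : vT;
  vadd : vT -> vT -> vT;
  vopp : vT -> vT;
  vscal : R -> vT -> vT;
  vadd_assoc : forall x y z, vadd x (vadd y z) = vadd (vadd x y) z;
  vadd_comm : forall x y, vadd x y = vadd y x;
  vadd_0 : forall x, vadd x vzero = x;
  vadd_opp : forall x, vadd x (vopp x) = vzero;
  vscal_1 : forall x, vscal 1 x = x;
  vscal_assoc : forall a b x, vscal a (vscal b x) = vscal (a * b) x;
  vscal_distr_l : forall a x y, vscal a (vadd x y) = vadd (vscal a x) (vscal a y);
  vscal_distr_r : forall a b x, vscal (a + b) x = vadd (vscal a x) (vscal b x);
  vopen : (vT -> Prop) -> Prop;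
  vopen_full : vopen (fun _ => True);
  vopen_inter : forall U V, vopen U -> vopen V -> vopen (fun x => U x /\ V x);
  vopen_union : forall Fam : (vT -> Prop) -> Prop,
      (forall U, Fam U -> vopen U) -> vopen (fun x => exists U, Fam U /\ U x);
  vadd_cont : forall (U : vT -> Prop) x y, vopen U -> U (vadd x y) ->
      exists V W, vopen V /\ vopen W /\ V x /\ W y /\
        forall x' y', V x' -> W y' -> U (vadd x' y');
  vscal_cont : forall (U : vT -> Prop) t x, vopen U -> U (vscal t x) ->
      exists d W, 0 < d /\ vopen W /\ W x /\
        forall s y, Rabs (s - t) < d -> W y -> U (vscal s y)
}.

Arguments vzero {_}.
Arguments vadd {_}.
Arguments vscal {_}.
Arguments vopen {_}.

Section Defs.
Variable F : TVS.

Fixpoint sumR (l : list R) : R :=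
  match l with [] => 0 | a :: l' => a + sumR l' end.

Fixpoint lincomb (l : list R) (xs : list F) : F :=
  match l, xs with
  | a :: l', x :: xs' => vadd (vscal a x) (lincomb l' xs')
  | _, _ => vzero
  end.

Definition convex_coeffs (lam : list R) (n : nat) : Prop :=
  length lam = n /\ Forall (fun a => 0 <= a) lam /\ sumR lam = 1.

Definition affinely_independent (vs : list F) : Prop :=
  forall lam : list R, length lam = length vs -> sumR lam = 0 ->
    lincomb lam vs = vzero -> Forall (fun a => a = 0) lam.

Definition is_simplex (K : F -> Prop) : Prop :=
  exists vs : list F, vs <> [] /\ affinely_independent vs /\
    forall x, K x <-> exists lam, convex_coeffs lam (length vs) /\ x = lincomb lam vs.

(* Correspondences X -> 2^Y are represented as S : F -> F -> Prop,
   with S x y meaning y \in S(x). *)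

Definition graph (X : F -> Prop) (S : F -> F -> Prop) (x y : F) : Prop :=
  X x /\ S x y.

(* \overline{S}(x) = {y in Y : (x,y) in cl_{X x Y} Gr(S)} *)
Definition closure_corr (X Y : F -> Prop) (S : F -> F -> Prop) (x y : F) : Prop :=
  X x /\ Y y /\
  forall U W : F -> Prop, vopen U -> vopen W -> U x -> W y ->
    exists x' y', graph X S x' y' /\ U x' /\ W y'.

Definition neighborhood_origin (V : F -> Prop) : Prop :=
  exists U, vopen U /\ U vzero /\ forall z, U z -> V z.

Definition corr_V (Y : F -> Prop) (S : F -> F -> Prop) (V : F -> Prop) (x y : F) : Prop :=
  Y y /\ exists s v, S x s /\ V v /\ y = vadd s v.

Definition weakly_convex_graph (X : F -> Prop) (S : F -> F -> Prop) : Prop :=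
  forall xs : list F, NoDup xs -> Forall X xs ->
    exists ys : list F, Forall2 S xs ys /\
      forall lam, convex_coeffs lam (length xs) ->
        graph X S (lincomb lam xs) (lincomb lam ys).

Definition star_weakly_convex_graph (X Y : F -> Prop) (S : F -> F -> Prop) : Prop :=
  forall V, neighborhood_origin V -> weakly_convex_graph X (corr_V Y S V).

End Defs.

From Stdlib Require Import Reals List Lra Lia Classical ClassicalEpsilon.
Import ListNotations.
Open Scope R_scope.

(* Write the simplex as K = { lcomb vs f | f in Delta_n }, where vs lists the
   n affinely independent vertices and Delta_n is the standard simplex of
   coefficient vectors.  Suppose T has no fixed point.  Then (x, x) lies
   outside the closure of Gr(S) for every x in K, which yields a neighbourhood
   A of x and a neighbourhood W of 0 such that no s in S(x') (x' in A) satisfies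
   s + w in A with w in W.  Pulling these back to Delta_n and using that Delta_n
   is compact, a single radius d > 0 and a single neighbourhood W of 0 serve
   uniformly (uniform_separation).
   On the other hand, *-weak convexity of S applied to V = W at the vertices
   selects images y_j = lcomb vs (mu_j); the coefficient vectors mu_j form a
   stochastic matrix, whose Cesaro averages give an almost-invariant
   probability vector l (markov_approx_fixed_point).  Weak convexity then
   produces s in S(lcomb vs l) and w in W with s + w = lcomb vs l', where l'
   is d-close to l (approx_fixed_point), contradicting uniform separation. *)

Section VectorAlgebra.
Variable F : TVS.

Lemma vadd_0l (x : F) : vadd vzero x = x.
Proof. rewrite vadd_comm; apply vadd_0. Qed.

Lemma vadd_cancel_l (x y z : F) : vadd x y = vadd x z -> y = z.
Proof.
  intro H.
  assert (H' : vadd (vopp F x) (vadd x y) = vadd (vopp F x) (vadd x z)) by now rewrite H.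
  rewrite !vadd_assoc, (vadd_comm _ (vopp F x) x), vadd_opp, !vadd_0l in H'.
  exact H'.
Qed.

Lemma vscal_0l (x : F) : vscal 0 x = vzero.
Proof.
  symmetry. apply (vadd_cancel_l (vscal 0 x)).
  rewrite vadd_0, <- vscal_distr_r, Rplus_0_l. reflexivity.
Qed.

Lemma vscal_0r (a : R) : vscal a (@vzero F) = vzero.
Proof.
  symmetry. apply (vadd_cancel_l (vscal a vzero)).
  rewrite vadd_0, <- vscal_distr_l, vadd_0. reflexivity.
Qed.

Lemma vadd_scal_opp (x : F) : vadd x (vscal (-1) x) = vzero.
Proof.
  rewrite <- (vscal_1 _ x) at 1. rewrite <- vscal_distr_r.
  replace (1 + -1) with 0 by ring. apply vscal_0l.
Qed.

Lemma vsub_add (s w : F) : vadd (vadd s w) (vscal (-1) w) = s.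
Proof. rewrite <- vadd_assoc, vadd_scal_opp, vadd_0. reflexivity. Qed.

Lemma vadd_swap (a b c d : F) : vadd (vadd a b) (vadd c d) = vadd (vadd a c) (vadd b d).
Proof.
  rewrite <- !vadd_assoc. f_equal. rewrite !vadd_assoc. f_equal. apply vadd_comm.
Qed.

Lemma open_sub_nbhd (O : F -> Prop) (x : F) : vopen O -> O x ->
  exists A W, vopen A /\ vopen W /\ A x /\ W vzero /\
    forall a w, A a -> W w -> O (vadd a (vscal (-1) w)).
Proof.
  intros HO Hx.
  assert (Hx' : O (vadd x (vscal (-1) vzero))) by now rewrite vscal_0r, vadd_0.
  destruct (vadd_cont F O _ _ HO Hx') as (A & B & HA & HB & HAx & HB0 & HAB).
  destruct (vscal_cont F B (-1) vzero HB HB0) as (d & W & Hd & HW & HW0 & HWB).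
  exists A, W. repeat split; auto.
  intros a w Ha Hw. apply HAB; auto. apply HWB; auto.
  rewrite Rminus_diag, Rabs_R0. exact Hd.
Qed.

End VectorAlgebra.

Fixpoint sumRn (n : nat) (h : nat -> R) : R :=
  match n with O => 0 | S m => h O + sumRn m (fun i => h (S i)) end.

Lemma sumRn_ext n h h' : (forall i, (i < n)%nat -> h i = h' i) -> sumRn n h = sumRn n h'.
Proof.
  revert h h'; induction n as [|n IH]; intros h h' H; simpl; auto.
  rewrite (H 0%nat) by lia. f_equal. apply IH. intros; apply H; lia.
Qed.

Lemma sumRn_zero n : sumRn n (fun _ => 0) = 0.
Proof. induction n; simpl; auto. rewrite IHn; ring. Qed.

Lemma sumRn_add n h k : sumRn n (fun i => h i + k i) = sumRn n h + sumRn n k.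
Proof. revert h k; induction n as [|n IH]; intros; simpl; [ring | rewrite IH; ring]. Qed.

Lemma sumRn_minus n h k : sumRn n (fun i => h i - k i) = sumRn n h - sumRn n k.
Proof. revert h k; induction n as [|n IH]; intros; simpl; [ring | rewrite IH; ring]. Qed.

Lemma sumRn_scal n a h : sumRn n (fun i => a * h i) = a * sumRn n h.
Proof. revert h; induction n as [|n IH]; intros; simpl; [ring | rewrite IH; ring]. Qed.

Lemma sumRn_scal_r n h c : sumRn n h * c = sumRn n (fun i => h i * c).
Proof.
  rewrite Rmult_comm, <- sumRn_scal. apply sumRn_ext. intros; ring.
Qed.

Lemma sumRn_exch n m (H : nat -> nat -> R) :
  sumRn n (fun j => sumRn m (fun i => H j i)) = sumRn m (fun i => sumRn n (fun j => H j i)).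
Proof.
  revert H; induction n as [|n IH]; intros; simpl.
  - now rewrite sumRn_zero.
  - rewrite IH, <- sumRn_add. reflexivity.
Qed.

Lemma sumRn_telescope n (a : nat -> R) : sumRn n (fun k => a (S k) - a k) = a n - a O.
Proof.
  revert a; induction n as [|n IH]; intros; simpl; [ring |].
  rewrite (IH (fun k => a (S k))). ring.
Qed.

Lemma sumRn_const n : sumRn n (fun _ => 1) = INR n.
Proof.
  induction n as [|n IH]; [reflexivity |].
  change (1 + sumRn n (fun _ => 1) = INR (S n)). rewrite IH, S_INR. ring.
Qed.

Lemma sumRn_nonneg n h : (forall i, (i < n)%nat -> 0 <= h i) -> 0 <= sumRn n h.
Proof.
  revert h; induction n as [|n IH]; intros h H; simpl; [lra |].
  assert (0 <= h 0%nat) by (apply H; lia).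
  assert (0 <= sumRn n (fun i => h (S i))) by (apply IH; intros; apply H; lia).
  lra.
Qed.

Lemma sumRn_le_elem n h j : (forall i, (i < n)%nat -> 0 <= h i) -> (j < n)%nat -> h j <= sumRn n h.
Proof.
  revert h j; induction n as [|n IH]; intros h j H Hj; simpl; [lia |].
  destruct j as [|j].
  - assert (0 <= sumRn n (fun i => h (S i))) by (apply sumRn_nonneg; intros; apply H; lia).
    lra.
  - assert (0 <= h 0%nat) by (apply H; lia).
    assert (h (S j) <= sumRn n (fun i => h (S i))) by (apply (IH (fun i => h (S i))); [intros; apply H | ]; lia).
    lra.
Qed.

Lemma sumRn_abs n h : Rabs (sumRn n h) <= sumRn n (fun i => Rabs (h i)).
Proof.
  revert h; induction n as [|n IH]; intros; simpl; [rewrite Rabs_R0; lra |].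
  eapply Rle_trans; [apply Rabs_triang |]. specialize (IH (fun i => h (S i))). lra.
Qed.

Lemma sumRn_bound n h c : (forall i, (i < n)%nat -> h i <= c) -> sumRn n h <= INR n * c.
Proof.
  revert h; induction n as [|n IH]; intros h H; [simpl; lra |].
  change (h 0%nat + sumRn n (fun i => h (S i)) <= INR (S n) * c).
  assert (h 0%nat <= c) by (apply H; lia).
  assert (sumRn n (fun i => h (S i)) <= INR n * c) by (apply IH; intros; apply H; lia).
  rewrite S_INR. lra.
Qed.

Definition unit_vec (i k : nat) : R := if Nat.eqb k i then 1 else 0.

Lemma sumRn_unit n i : (i < n)%nat -> sumRn n (unit_vec i) = 1.
Proof.
  revert i; induction n as [|n IH]; intros i H; simpl; [lia |].
  destruct i as [|i].
  - change (1 + sumRn n (fun _ => 0) = 1). rewrite sumRn_zero. ring.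
  - change (0 + sumRn n (unit_vec i) = 1). rewrite (IH i) by lia. ring.
Qed.

Lemma sumR_sumRn lam : sumR lam = sumRn (length lam) (fun i => nth i lam 0).
Proof. induction lam; simpl; auto. now rewrite IHlam. Qed.

Lemma nth_map_seq (f : nat -> R) n i : (i < n)%nat -> nth i (map f (seq 0 n)) 0 = f i.
Proof.
  intro H. rewrite (nth_indep _ _ (f 0%nat)) by (rewrite length_map, length_seq; auto).
  rewrite map_nth, seq_nth by auto. reflexivity.
Qed.

Definition std_simplex (n : nat) (f : nat -> R) : Prop :=
  (forall i, (i < n)%nat -> 0 <= f i) /\ sumRn n f = 1.

Definition cube (n : nat) (x : nat -> R) : Prop := forall i, (i < n)%nat -> 0 <= x i <= 1.

Definition close (n : nat) (d : R) (x y : nat -> R) : Prop :=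
  forall i, (i < n)%nat -> Rabs (x i - y i) < d.

Lemma close_weaken n d d' x y : d <= d' -> close n d x y -> close n d' x y.
Proof. intros Hd H i Hi. specialize (H i Hi). lra. Qed.

Lemma close_trans n d1 d2 x y z : close n d1 x y -> close n d2 y z -> close n (d1 + d2) x z.
Proof.
  intros Hxy Hyz i Hi. specialize (Hxy i Hi). specialize (Hyz i Hi).
  replace (x i - z i) with ((x i - y i) + (y i - z i)) by ring.
  pose proof (Rabs_triang (x i - y i) (y i - z i)). lra.
Qed.

Lemma simplex_in_cube n f : std_simplex n f -> cube n f.
Proof. intros [H0 H1] i Hi. split; [auto | rewrite <- H1; now apply sumRn_le_elem]. Qed.

Lemma unit_vec_simplex n i : (i < n)%nat -> std_simplex n (unit_vec i).
Proof.
  intro Hi. split; [| now apply sumRn_unit].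
  intros k _. unfold unit_vec. destruct (Nat.eqb k i); lra.
Qed.

Lemma simplex_to_coeffs n f : std_simplex n f -> convex_coeffs (map f (seq 0 n)) n.
Proof.
  intros [H0 H1]. split; [| split].
  - now rewrite length_map, length_seq.
  - apply Forall_forall. intros x Hx. apply in_map_iff in Hx.
    destruct Hx as [i [<- Hi]]. apply in_seq in Hi. apply H0. lia.
  - rewrite sumR_sumRn, length_map, length_seq, <- H1.
    apply sumRn_ext. intros; now apply nth_map_seq.
Qed.

Lemma coeffs_to_simplex lam n : convex_coeffs lam n -> std_simplex n (fun i => nth i lam 0).
Proof.
  intros [Hlen [Hpos Hsum]]. split.
  - intros i Hi. rewrite Forall_nth in Hpos. apply Hpos. lia.
  - rewrite sumR_sumRn in Hsum. now rewrite <- Hlen.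
Qed.

Definition min_list (l : list R) : R := fold_right Rmin 1 l.

Lemma min_list_pos l : (forall x, In x l -> 0 < x) -> 0 < min_list l.
Proof. induction l; simpl; intros H; [lra | apply Rmin_pos; auto]. Qed.

Lemma min_list_le l x : In x l -> min_list l <= x.
Proof.
  induction l as [|a l IH]; simpl; intros H; [contradiction |].
  destruct H as [<- | H]; [apply Rmin_l | eapply Rle_trans; [apply Rmin_r | auto]].
Qed.

Lemma interval_cover (rho : R -> R) : (forall a, 0 <= a <= 1 -> 0 < rho a) ->
  exists A, (forall a, In a A -> 0 <= a <= 1) /\
    forall x, 0 <= x <= 1 -> exists a, In a A /\ Rabs (x - a) < rho a.
Proof.
  intro Hrho.
  set (fam := mkfamily (fun a => 0 <= a <= 1)
     (fun a x => (0 <= a <= 1) /\ Rabs (x - a) < rho a)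
     (fun a (H : exists y, (0 <= a <= 1) /\ Rabs (y - a) < rho a) =>
        match H with ex_intro _ _ h => proj1 h end)).
  assert (Hcov : covering_open_set (fun c => 0 <= c <= 1) fam).
  { split.
    - intros x Hx. exists x. simpl. split; auto. rewrite Rminus_diag, Rabs_R0. auto.
    - intros a y [Ha Hy]. simpl in *.
      assert (Hp : 0 < rho a - Rabs (y - a)) by lra.
      exists (mkposreal _ Hp). intros z Hz. unfold disc in Hz; simpl in Hz. split; auto.
      replace (z - a) with ((z - y) + (y - a)) by ring.
      pose proof (Rabs_triang (z - y) (y - a)). lra. }
  destruct (compact_P3 0 1 fam Hcov) as [D [HDcov [l Hl]]].
  exists l. split.
  - intros a Ha. apply Hl in Ha. apply Ha.
  - intros x Hx. destruct (HDcov x Hx) as [a [[Ha Hxa] HD]].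
    exists a. split; auto. apply Hl. split; auto.
Qed.

Definition cons_coord (a : R) (y : nat -> R) : nat -> R :=
  fun i => match i with O => a | S k => y k end.

(* Compactness of the cube [0,1]^n in gauge form, by induction on n:
   cover the first coordinate with interval_cover, using as gauge the least
   gauge of a cover of the remaining coordinates. *)
Lemma cube_cover n (dl : (nat -> R) -> R) : (forall t, cube n t -> 0 < dl t) ->
  exists L, (forall t, In t L -> cube n t) /\
    forall x, cube n x -> exists t, In t L /\ close n (dl t) x t.
Proof.
  revert dl; induction n as [|n IH]; intros dl Hdl.
  - exists [fun _ => 0]. split.
    + intros t _ i Hi. lia.
    + intros x _. exists (fun _ => 0). split; [now left | intros i Hi; lia].
  - assert (Hcons : forall a t, 0 <= a <= 1 -> cube n t -> cube (S n) (cons_coord a t)).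
    { intros a t Ha Ht [|i] Hi; simpl; auto. apply Ht; lia. }
    destruct (choice (fun a L => 0 <= a <= 1 -> (forall t, In t L -> cube n t) /\
        forall y, cube n y -> exists t, In t L /\ close n (dl (cons_coord a t)) y t))
      as [Lf HLf].
    { intro a. destruct (classic (0 <= a <= 1)) as [Ha | Ha].
      - destruct (IH (fun t => dl (cons_coord a t))) as [L HL].
        { intros t Ht. apply Hdl, Hcons; auto. }
        exists L. auto.
      - exists []. intro; contradiction. }
    set (rho a := min_list (map (fun t => dl (cons_coord a t)) (Lf a))).
    destruct (interval_cover rho) as [A [HA HAcov]].
    { intros a Ha. apply min_list_pos. intros r Hr. apply in_map_iff in Hr.
      destruct Hr as [t [<- Ht]]. apply Hdl, Hcons; auto. now apply (HLf a Ha). }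
    exists (flat_map (fun a => map (cons_coord a) (Lf a)) A). split.
    + intros t Ht. apply in_flat_map in Ht. destruct Ht as [a [Ha Ht]].
      apply in_map_iff in Ht. destruct Ht as [y [<- Hy]].
      apply Hcons; auto. now apply (HLf a (HA a Ha)).
    + intros x Hx.
      destruct (HAcov (x O)) as [a [Ha Hxa]]; [apply Hx; lia |].
      destruct (proj2 (HLf a (HA a Ha)) (fun i => x (S i))) as [t [Ht Hxt]].
      { intros i Hi. apply Hx. lia. }
      exists (cons_coord a t). split.
      * apply in_flat_map. exists a. split; auto. now apply in_map.
      * assert (rho a <= dl (cons_coord a t)) by (apply min_list_le, in_map_iff; exists t; auto).
        intros [|i] Hi; simpl; [lra | apply Hxt; lia].
Qed.

(* Off the
   simplex the gauge is chosen so small that no point of Delta_n is that close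
   (the coordinate sum would have to be near 1), so the useful centres of a
   cover of the cube lie in Delta_n. *)
Lemma simplex_cover n (dl : (nat -> R) -> R) : (forall t, std_simplex n t -> 0 < dl t) ->
  exists L, (forall t, In t L -> std_simplex n t) /\
    forall x, std_simplex n x -> exists t, In t L /\ close n (dl t) x t.
Proof.
  intro Hdl.
  set (gap t := Rabs (sumRn n t - 1) / (INR n + 1)).
  set (gauge t := if excluded_middle_informative (std_simplex n t) then dl t else gap t).
  set (in_simplex t := if excluded_middle_informative (std_simplex n t) then true else false).
  assert (Hn : 0 <= INR n) by apply pos_INR.
  destruct (cube_cover n gauge) as [L [HLcube HL]].
  { intros t Ht. unfold gauge. destruct (excluded_middle_informative _) as [Hs | Hs]; auto.
    assert (sumRn n t <> 1) by (intro; apply Hs; split; [intros i Hi; apply (Ht i Hi) | auto]).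
    apply Rdiv_lt_0_compat; [apply Rabs_pos_lt | ]; lra. }
  exists (filter in_simplex L). split.
  - intros t Ht. apply filter_In in Ht. unfold in_simplex in Ht.
    destruct (excluded_middle_informative _); [auto | easy].
  - intros x Hx. destruct (HL x (simplex_in_cube n x Hx)) as [t [Ht Hxt]].
    unfold gauge in Hxt. destruct (excluded_middle_informative (std_simplex n t)) as [Hs | Hs].
    + exists t. split; auto. apply filter_In. split; auto.
      unfold in_simplex. destruct (excluded_middle_informative _); easy.
    + exfalso.
      assert (Hsum : sumRn n t <> 1) by (intro; apply Hs; split; [intros i Hi; apply (HLcube t Ht i Hi) | auto]).
      assert (Hgap : Rabs (sumRn n t - 1) = gap t * (INR n + 1)) by (unfold gap; field; lra).
      assert (Hpos : 0 < gap t) by (apply Rdiv_lt_0_compat; [apply Rabs_pos_lt | ]; lra).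
      assert (Hdiff : Rabs (sumRn n (fun i => x i - t i)) <= INR n * gap t).
      { eapply Rle_trans; [apply sumRn_abs |].
        apply sumRn_bound. intros i Hi. left. apply Hxt; auto. }
      rewrite sumRn_minus, (proj2 Hx), Rabs_minus_sym in Hdiff.
      nra.
Qed.

Definition markov_step (n : nat) (mu : nat -> nat -> R) (l : nat -> R) : nat -> R :=
  fun i => sumRn n (fun j => l j * mu j i).

Lemma markov_step_simplex n mu l : (forall j, (j < n)%nat -> std_simplex n (mu j)) ->
  std_simplex n l -> std_simplex n (markov_step n mu l).
Proof.
  intros Hmu [Hl0 Hl1]. split.
  - intros i Hi. apply sumRn_nonneg. intros j Hj.
    apply Rmult_le_pos; [auto | apply (Hmu j Hj); auto].
  - unfold markov_step. rewrite sumRn_exch, <- Hl1. apply sumRn_ext. intros j Hj.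
    rewrite sumRn_scal, (proj2 (Hmu j Hj)). ring.
Qed.

(* A stochastic matrix has almost invariant probability vectors: the Cesaro
   average of the first N iterates is moved by one step by at most 1/N. *)
Lemma markov_approx_fixed_point n mu eps : (0 < n)%nat ->
  (forall j, (j < n)%nat -> std_simplex n (mu j)) -> 0 < eps ->
  exists l, std_simplex n l /\ close n eps (markov_step n mu l) l.
Proof.
  intros Hn Hmu Heps.
  set (orbit k := Nat.iter k (markov_step n mu) (unit_vec 0)).
  assert (Horbit : forall k, std_simplex n (orbit k)).
  { induction k as [|k IH]; [now apply unit_vec_simplex | now apply markov_step_simplex]. }
  destruct (archimed_cor1 eps Heps) as [N [HNeps HN]].
  assert (HNpos : 0 < INR N) by now apply lt_0_INR.
  assert (HNinv : 0 < / INR N) by now apply Rinv_0_lt_compat.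
  set (avg i := / INR N * sumRn N (fun k => orbit k i)).
  assert (Hdefect : forall i, markov_step n mu avg i - avg i = / INR N * (orbit N i - orbit 0%nat i)).
  { intro i. unfold markov_step at 1.
    rewrite (sumRn_ext n _ (fun j => / INR N * sumRn N (fun k => orbit k j * mu j i))).
    2: { intros j _. unfold avg. rewrite Rmult_assoc, sumRn_scal_r. reflexivity. }
    rewrite sumRn_scal, sumRn_exch.
    rewrite (sumRn_ext N _ (fun k => orbit (S k) i)) by (intros; reflexivity).
    unfold avg. rewrite <- (sumRn_telescope N (fun k => orbit k i)), sumRn_minus. ring. }
  exists avg. split.
  - split.
    + intros i Hi. apply Rmult_le_pos; [lra |].
      apply sumRn_nonneg. intros k _. now apply Horbit.
    + unfold avg. rewrite sumRn_scal, sumRn_exch.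
      rewrite (sumRn_ext N _ (fun _ => 1)) by (intros k _; apply Horbit).
      rewrite sumRn_const. field. lra.
  - intros i Hi. rewrite Hdefect.
    pose proof (simplex_in_cube n _ (Horbit N) i Hi).
    pose proof (simplex_in_cube n _ (Horbit 0%nat) i Hi).
    assert (Rabs (orbit N i - orbit 0%nat i) <= 1) by (apply Rabs_le; lra).
    rewrite Rabs_mult, Rabs_inv, (Rabs_right (INR N)) by lra.
    nra.
Qed.

Section Combinations.
Variable F : TVS.

Fixpoint lcomb (vs : list F) (f : nat -> R) : F :=
  match vs with
  | [] => vzero
  | v :: vs' => vadd (vscal (f O) v) (lcomb vs' (fun i => f (S i)))
  end.

Lemma lcomb_ext vs f g : (forall i, (i < length vs)%nat -> f i = g i) -> lcomb vs f = lcomb vs g.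
Proof.
  revert f g; induction vs as [|v vs IH]; intros f g H; simpl; auto.
  rewrite (H 0%nat) by (simpl; lia). f_equal. apply IH. intros i Hi. apply H. simpl; lia.
Qed.

Lemma lcomb_zero vs : lcomb vs (fun _ => 0) = vzero.
Proof. induction vs as [|v vs IH]; simpl; auto. rewrite IH, vscal_0l. apply vadd_0. Qed.

Lemma lcomb_add vs f g : lcomb vs (fun i => f i + g i) = vadd (lcomb vs f) (lcomb vs g).
Proof.
  revert f g; induction vs as [|v vs IH]; intros; simpl; [now rewrite vadd_0 |].
  rewrite IH, vscal_distr_r. apply vadd_swap.
Qed.

Lemma lcomb_scal vs a f : lcomb vs (fun i => a * f i) = vscal a (lcomb vs f).
Proof.
  revert f; induction vs as [|v vs IH]; intros; simpl; [now rewrite vscal_0r |].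
  rewrite IH, vscal_distr_l, vscal_assoc. reflexivity.
Qed.

Lemma lcomb_unit vs i : (i < length vs)%nat -> lcomb vs (unit_vec i) = nth i vs vzero.
Proof.
  revert i; induction vs as [|v vs IH]; intros i Hi; simpl in *; [lia |].
  destruct i as [|i].
  - change (vadd (vscal 1 v) (lcomb vs (fun _ => 0)) = v).
    rewrite vscal_1, lcomb_zero. apply vadd_0.
  - change (vadd (vscal 0 v) (lcomb vs (unit_vec i)) = nth i vs vzero).
    rewrite vscal_0l, vadd_0l. apply IH. lia.
Qed.

Lemma lincomb_lcomb (xs : list F) lam : length lam = length xs ->
  lincomb F lam xs = lcomb xs (fun i => nth i lam 0).
Proof.
  revert lam; induction xs as [|x xs IH]; intros [|a lam] H; simpl in *; try lia; auto.
  rewrite IH by lia. reflexivity.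
Qed.

Lemma lincomb_map (xs : list F) f : lincomb F (map f (seq 0 (length xs))) xs = lcomb xs f.
Proof.
  rewrite lincomb_lcomb by (now rewrite length_map, length_seq).
  apply lcomb_ext. intros; now apply nth_map_seq.
Qed.

Lemma lcomb_compose (vs ys : list F) (mu : nat -> nat -> R) (l : nat -> R) :
  (forall j, (j < length ys)%nat -> nth j ys vzero = lcomb vs (mu j)) ->
  lcomb ys l = lcomb vs (fun i => sumRn (length ys) (fun j => l j * mu j i)).
Proof.
  revert mu l; induction ys as [|y ys IH]; intros mu l H; simpl.
  - now rewrite lcomb_zero.
  - rewrite (IH (fun j => mu (S j))) by (intros j Hj; apply (H (S j)); simpl; lia).
    replace y with (lcomb vs (mu 0%nat)) by (symmetry; apply (H 0%nat); simpl; lia).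
    now rewrite lcomb_add, lcomb_scal.
Qed.

Lemma lcomb_continuous vs f (O : F -> Prop) : vopen O -> O (lcomb vs f) ->
  exists d, 0 < d /\ forall f', close (length vs) d f' f -> O (lcomb vs f').
Proof.
  revert f O; induction vs as [|v vs IH]; intros f O HO HOf.
  - exists 1. split; [lra | auto].
  - simpl in HOf.
    destruct (vadd_cont F O _ _ HO HOf) as (A & B & HA & HB & HAf & HBf & HAB).
    destruct (vscal_cont F A (f 0%nat) v HA HAf) as (d0 & W & Hd0 & HW & HWv & Hsc).
    destruct (IH (fun i => f (S i)) B HB HBf) as (d1 & Hd1 & Htail).
    exists (Rmin d0 d1). split; [now apply Rmin_pos |].
    intros f' Hf'. simpl. apply HAB.
    + apply Hsc; auto. eapply Rlt_le_trans; [apply Hf'; simpl; lia | apply Rmin_l].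
    + apply (Htail (fun i => f' (S i))). intros i Hi.
      eapply Rlt_le_trans; [apply (Hf' (S i)); simpl; lia | apply Rmin_r].
Qed.

Lemma affinely_independent_NoDup (vs : list F) : affinely_independent F vs -> NoDup vs.
Proof.
  intro HAI. apply (NoDup_nth vs vzero). intros i j Hi Hj Heq.
  destruct (Nat.eq_dec i j) as [| Hij]; [assumption | exfalso].
  (* the coefficients e_i - e_j sum to 0 and combine v_i - v_j = 0 *)
  set (f k := unit_vec i k + -1 * unit_vec j k).
  assert (Hlen : length (map f (seq 0 (length vs))) = length vs) by now rewrite length_map, length_seq.
  assert (Hsum : sumR (map f (seq 0 (length vs))) = 0).
  { rewrite sumR_sumRn, Hlen, (sumRn_ext _ _ f) by (intros; now apply nth_map_seq).
    unfold f. rewrite sumRn_add, sumRn_scal, !sumRn_unit by auto. ring. }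
  assert (Hcomb : lincomb F (map f (seq 0 (length vs))) vs = vzero).
  { rewrite lincomb_map. unfold f.
    rewrite lcomb_add, lcomb_scal, !lcomb_unit, Heq by auto. apply vadd_scal_opp. }
  pose proof (HAI _ Hlen Hsum Hcomb) as Hzero. rewrite Forall_nth in Hzero.
  specialize (Hzero i 0 ltac:(now rewrite Hlen)). rewrite nth_map_seq in Hzero by auto.
  unfold f, unit_vec in Hzero. rewrite Nat.eqb_refl in Hzero.
  apply Nat.eqb_neq in Hij. rewrite Hij in Hzero. lra.
Qed.

Lemma simplex_coordinates (K : F -> Prop) : is_simplex F K ->
  exists vs, (0 < length vs)%nat /\ NoDup vs /\
    forall x, K x <-> exists f, std_simplex (length vs) f /\ x = lcomb vs f.
Proof.
  intros [vs [Hne [HAI HK]]]. exists vs. split; [| split].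
  - destruct vs; [congruence | simpl; lia].
  - now apply affinely_independent_NoDup.
  - intro x. rewrite HK. split.
    + intros [lam [Hlam ->]]. exists (fun i => nth i lam 0). split.
      * now apply coeffs_to_simplex.
      * apply lincomb_lcomb, Hlam.
    + intros [f [Hf ->]]. exists (map f (seq 0 (length vs))). split.
      * now apply simplex_to_coeffs.
      * symmetry. apply lincomb_map.
Qed.

(* Approximate fixed points of S_V: weak convexity of the graph of S_V at the
   vertices produces a stochastic matrix of coordinates, and an almost
   invariant vector l of it gives s in S(lcomb vs l), v in V with s + v the
   combination of a coefficient vector eps-close to l. *)
Lemma approx_fixed_point (vs : list F) (K : F -> Prop) (S : F -> F -> Prop) (V : F -> Prop) eps :
  (0 < length vs)%nat -> NoDup vs ->
  (forall x, K x <-> exists f, std_simplex (length vs) f /\ x = lcomb vs f) ->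
  weakly_convex_graph F K (corr_V F K S V) -> 0 < eps ->
  exists l l' s v, std_simplex (length vs) l /\ close (length vs) eps l' l /\
    S (lcomb vs l) s /\ V v /\ vadd s v = lcomb vs l'.
Proof.
  intros Hn HND HK Hwcg Heps.
  set (n := length vs) in *.
  destruct (Hwcg vs HND) as [ys [Hys Hgraph]].
  { apply Forall_forall. intros v Hv. destruct (In_nth vs v vzero Hv) as [i [Hi <-]].
    apply HK. exists (unit_vec i). split; [now apply unit_vec_simplex |].
    symmetry. now apply lcomb_unit. }
  assert (Hlen : length ys = n) by (symmetry; exact (Forall2_length Hys)).
  assert (HysK : Forall K ys).
  { clear - Hys. induction Hys as [| x y xs ys [HKy _] _ IH]; constructor; auto. }
  rewrite Forall_forall in HysK.
  (* barycentric coordinates mu_j of the selected images y_j of the vertices *)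
  destruct (choice (fun j muj => (j < n)%nat -> std_simplex n muj /\ nth j ys vzero = lcomb vs muj))
    as [mu Hmu].
  { intro j. destruct (Nat.lt_ge_cases j n) as [Hj | Hj].
    - destruct (proj1 (HK _) (HysK _ (nth_In ys vzero (n := j) ltac:(lia)))) as [f Hf]. exists f. auto.
    - exists (fun _ => 0). intro; lia. }
  destruct (markov_approx_fixed_point n mu eps Hn (fun j Hj => proj1 (Hmu j Hj)) Heps)
    as [l [Hl Hclose]].
  destruct (Hgraph (map l (seq 0 n)) (simplex_to_coeffs n l Hl)) as [_ [_ [s [v [Hs [Hv Hsv]]]]]].
  exists l, (markov_step n mu l), s, v. refine (conj Hl (conj Hclose (conj _ (conj Hv _)))).
  - unfold n in Hs. now rewrite lincomb_map in Hs.
  - rewrite <- Hsv, <- Hlen, lincomb_map, (lcomb_compose vs ys mu l).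
    + now rewrite Hlen.
    + intros j Hj. rewrite Hlen in Hj. now apply Hmu.
Qed.

Definition inter_list (Ws : list (F -> Prop)) : F -> Prop :=
  fold_right (fun W P z => W z /\ P z) (fun _ => True) Ws.

Lemma inter_list_nbhd Ws : (forall W, In W Ws -> vopen W /\ W vzero) ->
  vopen (inter_list Ws) /\ inter_list Ws vzero.
Proof.
  induction Ws as [|W Ws IH]; intros H; simpl; [split; [apply vopen_full | auto] |].
  destruct (H W (or_introl eq_refl)) as [HW HW0].
  destruct IH as [HO H0]; [intros; apply H; simpl; auto |].
  split; [now apply vopen_inter | auto].
Qed.

Lemma inter_list_sub Ws W z : In W Ws -> inter_list Ws z -> W z.
Proof.
  induction Ws as [|W' Ws IH]; simpl; intros HW Hz; [contradiction |].
  destruct Hz. destruct HW as [<- | HW]; auto.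
Qed.

Lemma off_diagonal_separation (K : F -> Prop) (S : F -> F -> Prop) x :
  K x -> ~ closure_corr F K K S x x ->
  exists A W, vopen A /\ vopen W /\ A x /\ W vzero /\
    forall x' y' s w, K x' -> A x' -> A y' -> S x' s -> W w -> vadd s w <> y'.
Proof.
  intros Hx Hncl.
  assert (Hsep : exists U0 W0, vopen U0 /\ vopen W0 /\ U0 x /\ W0 x /\
            forall x' y', graph F K S x' y' -> U0 x' -> W0 y' -> False).
  { apply NNPP. intro Hnone. apply Hncl. split; [exact Hx | split; [exact Hx |]].
    intros U0 W0 HU0 HW0 HU0x HW0x. apply NNPP. intro Hempty. apply Hnone.
    exists U0, W0. repeat split; auto.
    intros x' y' Hg Hx' Hy'. apply Hempty. exists x', y'. auto. }
  destruct Hsep as (U0 & W0 & HU0 & HW0 & HU0x & HW0x & Hsep).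
  destruct (open_sub_nbhd F (fun z => U0 z /\ W0 z) x) as (A & W & HA & HW & HAx & HW0' & HAW);
    [now apply vopen_inter | auto |].
  exists A, W. repeat split; auto.
  intros x' y' s w Hx' HAx' HAy' Hs Hw Hsw.
  (* x' = x' - 0 lies in U0 and s = y' - w lies in W0 *)
  pose proof (HAW x' vzero HAx' HW0') as Hx''. rewrite vscal_0r, vadd_0 in Hx''.
  pose proof (HAW y' w HAy' Hw) as Hs'. rewrite <- Hsw, vsub_add in Hs'.
  apply (Hsep x' s); [split | |]; tauto.
Qed.

Definition no_collision (S : F -> F -> Prop) (vs : list F) (W : F -> Prop) (l l' : nat -> R) : Prop :=
  forall s w, S (lcomb vs l) s -> W w -> vadd s w <> lcomb vs l'.

Lemma coordinate_separation (vs : list F) (K : F -> Prop) (S : F -> F -> Prop) t :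
  (forall f, std_simplex (length vs) f -> K (lcomb vs f)) ->
  std_simplex (length vs) t -> ~ closure_corr F K K S (lcomb vs t) (lcomb vs t) ->
  exists d W, 0 < d /\ vopen W /\ W vzero /\
    forall l l', std_simplex (length vs) l -> close (length vs) d l t ->
      close (length vs) d l' l -> no_collision S vs W l l'.
Proof.
  intros HKl Ht Hncl.
  destruct (off_diagonal_separation K S (lcomb vs t) (HKl t Ht) Hncl)
    as (A & W & HA & HW & HAx & HW0 & Hsep).
  destruct (lcomb_continuous vs t A HA HAx) as (d & Hd & Hcont).
  exists (d / 2), W. repeat split; auto; [lra |].
  intros l l' Hl Hlt Hl'l s w Hs Hw.
  apply (Hsep (lcomb vs l) (lcomb vs l') s w (HKl l Hl)); auto.
  - apply Hcont. apply (close_weaken _ (d / 2)); [lra | auto].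
  - apply Hcont. replace d with (d / 2 + d / 2) by field. now apply (close_trans _ _ _ _ l).
Qed.

(* By compactness of Delta_n, local separation data around every point of
   Delta_n can be replaced by a single radius and neighbourhood of 0. *)
Lemma uniform_separation n (vs : list F) (S : F -> F -> Prop) :
  (forall t, std_simplex n t -> exists d W, 0 < d /\ vopen W /\ W vzero /\
     forall l l', std_simplex n l -> close n d l t -> close n d l' l -> no_collision S vs W l l') ->
  exists d W, 0 < d /\ vopen W /\ W vzero /\
     forall l l', std_simplex n l -> close n d l' l -> no_collision S vs W l l'.
Proof.
  intro Hloc.
  destruct (choice (fun t (p : R * (F -> Prop)) => std_simplex n t ->
      0 < fst p /\ vopen (snd p) /\ snd p vzero /\
      forall l l', std_simplex n l -> close n (fst p) l t -> close n (fst p) l' l ->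
        no_collision S vs (snd p) l l')) as [p Hp].
  { intro t. destruct (classic (std_simplex n t)) as [Ht | Ht].
    - destruct (Hloc t Ht) as (d & W & HdW). exists (d, W). auto.
    - exists (1, fun _ => True). intro; contradiction. }
  destruct (simplex_cover n (fun t => fst (p t))) as [L [HL Hcov]].
  { intros t Ht. apply (Hp t Ht). }
  destruct (inter_list_nbhd (map (fun t => snd (p t)) L)) as [HWo HW0].
  { intros W HW. apply in_map_iff in HW. destruct HW as [t [<- Ht]].
    split; apply (Hp t (HL t Ht)). }
  exists (min_list (map (fun t => fst (p t)) L)), (inter_list (map (fun t => snd (p t)) L)).
  split; [| split; [| split]]; auto.
  - apply min_list_pos. intros r Hr. apply in_map_iff in Hr.
    destruct Hr as [t [<- Ht]]. apply (Hp t (HL t Ht)).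
  - intros l l' Hl Hl'l s w Hs Hw.
    destruct (Hcov l Hl) as [t [Ht Hlt]].
    destruct (Hp t (HL t Ht)) as (_ & _ & _ & Hsep).
    apply (Hsep l l' Hl Hlt); auto.
    + apply (close_weaken _ (min_list (map (fun t => fst (p t)) L))); auto.
      apply min_list_le, in_map_iff. exists t. auto.
    + apply (inter_list_sub _ _ _ (in_map (fun t => snd (p t)) L t Ht) Hw).
Qed.

End Combinations.

Theorem corollary1 (F : TVS) (K : F -> Prop) (S T : F -> F -> Prop)
  (hK : is_simplex F K)
  (hS : forall x y, K x -> S x y -> K y)
  (hT : forall x y, K x -> T x y -> K y)
  (h1 : forall x, K x -> (forall y, closure_corr F K K S x y -> T x y) /\ exists y, S x y)
  (h2 : star_weakly_convex_graph F K K S) :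
  exists xs, K xs /\ T xs xs.
Proof.
  apply NNPP. intro Hno.
  destruct (simplex_coordinates F K hK) as (vs & Hn & HND & HK).
  assert (HKl : forall f, std_simplex (length vs) f -> K (lcomb F vs f))
    by (intros f Hf; apply HK; eauto).
  (* without fixed points of T, no (x, x) lies in the closure of Gr(S) *)
  destruct (uniform_separation F (length vs) vs S) as (d & W & Hd & HW & HW0 & Hsep).
  { intros t Ht. apply (coordinate_separation F vs K S t HKl Ht).
    intro Hcl. apply Hno. exists (lcomb F vs t). split; [now apply HKl |].
    now apply (h1 _ (HKl t Ht)). }
  assert (HWnbhd : neighborhood_origin F W) by (exists W; auto).
  destruct (approx_fixed_point F vs K S W d Hn HND HK (h2 W HWnbhd) Hd)
    as (l & l' & s & v & Hl & Hl'l & Hs & Hv & Hsv).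
  exact (Hsep l l' Hl Hl'l s v Hs Hv Hsv).
Qed.
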